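(* Let $V$ and $W$ be two-dimensional inner-product spaces and let $x,y\in V$ be linearly independent. Let $\theta$ be the angle between $x$ and $y$ and $r=|y|/|x|$. There exists a constant $C>0$, depending continuously on $\theta$ and $r$, such that for every $A\in\mathrm{Hom}(V,W)$, \[ \mathrm{dist}^2(A,\mathrm{O}(V,W))\le C\left[\Big(\frac{|Ax|}{|x|}-1\Big)^2+\Big(\frac{|Ay|}{|y|}-1\Big)^2+\Big(\frac{|A(x+y)|}{|x+y|}-1\Big)^2\right]. \]
   Context: $\mathrm{O}(V,W)$ denotes the set of linear isometries $V\to W$. The distance is measured in the Frobenius (Hilbert–Schmidt) norm induced by the inner products on $V$ and $W$. *)

From HB Require Import structures.
From mathcomp Require Import all_boot all_order all_algebra.
From mathcomp Require Import all_classical all_reals all_analysis.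
Set Implicit Arguments. Unset Strict Implicit. Unset Printing Implicit Defensive.
Import Order.TTheory GRing.Theory Num.Theory.
Import numFieldNormedType.Exports.
Local Open Scope classical_set_scope.
Local Open Scope ring_scope.

(* A two-dimensional inner-product space is modelled (up to isometry) by the
   Euclidean space 'cV[R]_2 with the standard inner product; linear maps
   V -> W are 2x2 matrices acting by A *m x. *)

Definition ip {R : realType} (u v : 'cV[R]_2) : R := (u^T *m v) 0 0.
Definition vnorm {R : realType} (u : 'cV[R]_2) : R := Num.sqrt (ip u u).

Definition lin_indep2 {R : realType} (x y : 'cV[R]_2) : Prop :=
  forall a b : R, a *: x + b *: y = 0 -> a = 0 /\ b = 0.

Definition vangle {R : realType} (x y : 'cV[R]_2) : R :=
  acos (ip x y / (vnorm x * vnorm y)).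

Definition isometries {R : realType} : set 'M[R]_2 :=
  [set Q | forall v : 'cV[R]_2, vnorm (Q *m v) = vnorm v].

Definition frob {R : realType} (M : 'M[R]_2) : R :=
  Num.sqrt (\sum_(i < 2) \sum_(j < 2) M i j ^+ 2).

Definition dist_O {R : realType} (A : 'M[R]_2) : R :=
  inf [set frob (A - Q) | Q in isometries].

From HB Require Import structures.
From mathcomp Require Import all_boot all_order all_algebra.
From mathcomp Require Import all_classical all_reals all_analysis.
From mathcomp Require Import lra ring.
(* Let G = A^T A - 1 be the Gram defect of A and s, t the singular values of A.
   The squared distance from A to the isometries is (s - 1)^2 + (t - 1)^2,
   which is at most (s^2 - 1)^2 + (t^2 - 1)^2 = |G|^2 and at most
   |A|^2 + 2 = tr G + 4.  The quadratic form of G takes the value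
   ((|Av| / |v|)^2 - 1) |v|^2 at v = x, y, x + y, and these three values
   determine the symmetric matrix G; solving for its entries costs the factor
   (1 + 2 r + 2 / r) / sin^2 theta.  Finally |a^2 - 1| <= 3 |a - 1| for a near 1
   and |a^2 - 1| <= 2 (a - 1)^2 + 3 always: the first bound together with |G|^2
   handles small deviations, the second together with tr G + 4 large ones. *)

Set Implicit Arguments.
Unset Strict Implicit.
Unset Printing Implicit Defensive.

Import Order.TTheory GRing.Theory Num.Theory.
Import numFieldNormedType.Exports.
Local Open Scope ring_scope.

Section ScalarInequalities.
Variable R : rcfType.
Implicit Types a b c u v : R.

Lemma exists_unit_dot_eq_norm u v :
  exists c s : R, c ^+ 2 + s ^+ 2 = 1 /\ c * u + s * v = Num.sqrt (u ^+ 2 + v ^+ 2).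
Proof.
set m := Num.sqrt _.
have m2 : m ^+ 2 = u ^+ 2 + v ^+ 2 by rewrite sqr_sqrtr // addr_ge0 ?sqr_ge0.
have [m0 | m_neq0] := eqVneq m 0.
  exists 1, 0; split; first by rewrite expr1n expr0n addr0.
  have : u ^+ 2 + v ^+ 2 = 0 by rewrite -m2 m0 expr0n.
  by move/eqP; rewrite paddr_eq0 ?sqr_ge0 // !sqrf_eq0 => /andP[/eqP-> /eqP->]; rewrite m0; ring.
exists (u / m), (v / m); split.
  by rewrite !expr_div_n -mulrDl -m2 divff // expf_neq0.
have -> : u / m * u + v / m * v = m ^+ 2 / m by rewrite m2; field.
by rewrite expr2 mulrK // unitfE.
Qed.

Lemma sqr_subr1_le a : 0 <= a -> (a - 1) ^+ 2 <= (a ^+ 2 - 1) ^+ 2.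
Proof.
move=> a0; rewrite -subr_ge0.
have -> : (a ^+ 2 - 1) ^+ 2 - (a - 1) ^+ 2 = (a - 1) ^+ 2 * (a * (a + 2)) by ring.
by rewrite mulr_ge0 ?sqr_ge0 ?mulr_ge0 //; lra.
Qed.

(* N = |A|^2 and d = |det A| for a 2x2 matrix A with singular values s, t below. *)
Lemma singular_defect_le (N d : R) : 0 <= d -> 2 * d <= N ->
  N + 2 - 2 * Num.sqrt (N + 2 * d) <= N ^+ 2 - 2 * d ^+ 2 - 2 * N + 2.
Proof.
move=> d0 dN.
set u := Num.sqrt (N + 2 * d); set w := Num.sqrt (N - 2 * d).
have u2 : u ^+ 2 = N + 2 * d by rewrite sqr_sqrtr //; lra.
have w2 : w ^+ 2 = N - 2 * d by rewrite sqr_sqrtr //; lra.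
have wu : w <= u by rewrite -ler_sqr ?nnegrE ?sqrtr_ge0 // u2 w2; lra.
set s := (u + w) / 2; set t := (u - w) / 2.
have s0 : 0 <= s by rewrite divr_ge0 ?addr_ge0 ?sqrtr_ge0.
have t0 : 0 <= t by rewrite divr_ge0 // subr_ge0.
have eN : N = s ^+ 2 + t ^+ 2.
  have -> : s ^+ 2 + t ^+ 2 = (u ^+ 2 + w ^+ 2) / 2 by rewrite /s /t; field.
  by rewrite u2 w2; field.
have ed : d = s * t.
  have -> : s * t = (u ^+ 2 - w ^+ 2) / 4 by rewrite /s /t; field.
  by rewrite u2 w2; field.
have eu : u = s + t by rewrite /s /t; field.
rewrite eu eN ed.
have -> : s ^+ 2 + t ^+ 2 + 2 - 2 * (s + t) = (s - 1) ^+ 2 + (t - 1) ^+ 2 by ring.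
have -> : (s ^+ 2 + t ^+ 2) ^+ 2 - 2 * (s * t) ^+ 2 - 2 * (s ^+ 2 + t ^+ 2) + 2
  = (s ^+ 2 - 1) ^+ 2 + (t ^+ 2 - 1) ^+ 2 by ring.
by rewrite lerD ?sqr_subr1_le.
Qed.

Lemma abs_sqr_subr1_le_near1 a : 0 <= a -> (a - 1) ^+ 2 <= 1 ->
  `|a ^+ 2 - 1| <= 3 * `|a - 1|.
Proof.
move=> a0 a_near1; have a2 : a <= 2 by nra.
have -> : a ^+ 2 - 1 = (a - 1) * (a + 1) by ring.
by rewrite normrM mulrC (ger0_norm (_ : 0 <= a + 1)) ?ler_wpM2r //; lra.
Qed.

Lemma abs_sqr_subr1_le a : `|a ^+ 2 - 1| <= 2 * (a - 1) ^+ 2 + 3.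
Proof.
have := sqr_ge0 (a - 2); have := sqr_ge0 (a - 1).
by move=> ? ?; apply/ler_normlP; split; nra.
Qed.

Lemma sum_abs_sqr_subr1_sqr_le a b c : 0 <= a -> 0 <= b -> 0 <= c ->
  (a - 1) ^+ 2 + (b - 1) ^+ 2 + (c - 1) ^+ 2 < 1 ->
  (`|a ^+ 2 - 1| + `|b ^+ 2 - 1| + `|c ^+ 2 - 1|) ^+ 2
    <= 27 * ((a - 1) ^+ 2 + (b - 1) ^+ 2 + (c - 1) ^+ 2).
Proof.
move=> a0 b0 c0 S1.
have := sqr_ge0 (a - 1); have := sqr_ge0 (b - 1); have := sqr_ge0 (c - 1) => ? ? ?.
have ha : `|a ^+ 2 - 1| <= 3 * `|a - 1| by apply: abs_sqr_subr1_le_near1 => //; lra.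
have hb : `|b ^+ 2 - 1| <= 3 * `|b - 1| by apply: abs_sqr_subr1_le_near1 => //; lra.
have hc : `|c ^+ 2 - 1| <= 3 * `|c - 1| by apply: abs_sqr_subr1_le_near1 => //; lra.
have hL : `|a ^+ 2 - 1| + `|b ^+ 2 - 1| + `|c ^+ 2 - 1|
    <= 3 * (`|a - 1| + `|b - 1| + `|c - 1|) by rewrite !mulrDr; lra.
apply: le_trans (_ : (3 * (`|a - 1| + `|b - 1| + `|c - 1|)) ^+ 2 <= _).
  by rewrite ler_sqr ?nnegrE ?addr_ge0.
rewrite -[(a - 1) ^+ 2]real_normK ?num_real // -[(b - 1) ^+ 2]real_normK ?num_real //
  -[(c - 1) ^+ 2]real_normK ?num_real //.
have := sqr_ge0 (`|a - 1| - `|b - 1|); have := sqr_ge0 (`|b - 1| - `|c - 1|).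
have := sqr_ge0 (`|a - 1| - `|c - 1|); nra.
Qed.

Lemma sum_abs_sqr_subr1_le a b c :
  1 <= (a - 1) ^+ 2 + (b - 1) ^+ 2 + (c - 1) ^+ 2 ->
  `|a ^+ 2 - 1| + `|b ^+ 2 - 1| + `|c ^+ 2 - 1|
    <= 11 * ((a - 1) ^+ 2 + (b - 1) ^+ 2 + (c - 1) ^+ 2).
Proof.
have := abs_sqr_subr1_le a; have := abs_sqr_subr1_le b; have := abs_sqr_subr1_le c.
lra.
Qed.

Lemma normrM3_le a b c (a' b' c' : R) :
  `|a| <= a' -> `|b| <= b' -> `|c| <= c' -> `|a * b * c| <= a' * b' * c'.
Proof. by move=> *; rewrite !normrM !ler_pM ?mulr_ge0. Qed.

End ScalarInequalities.

Section Coordinates.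
Variable R : realType.
Implicit Types (u v x y : 'cV[R]_2) (A : 'M[R]_2).

Lemma ord2_cases (i : 'I_2) : i = 0 \/ i = 1.
Proof. by case: i => [[|[|//]] ?]; [left | right]; apply: val_inj. Qed.

Lemma sum_ord2 (F : 'I_2 -> R) : \sum_(i < 2) F i = F 0 + F 1.
Proof. by rewrite big_ord_recl big_ord1; congr (_ + F _); apply: val_inj. Qed.

Lemma cV2_ext u v : u 0 0 = v 0 0 -> u 1 0 = v 1 0 -> u = v.
Proof. by move=> e0 e1; apply/matrixP => i j; rewrite (ord1 j); case: (ord2_cases i) => ->. Qed.

Lemma ipE u v : ip u v = u 0 0 * v 0 0 + u 1 0 * v 1 0.
Proof. by rewrite /ip !mxE sum_ord2 !mxE. Qed.

Lemma mulmx2E A v i : (A *m v) i 0 = A i 0 * v 0 0 + A i 1 * v 1 0.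
Proof. by rewrite mxE sum_ord2. Qed.

Lemma det2E A : \det A = A 0 0 * A 1 1 - A 0 1 * A 1 0.
Proof.
rewrite (expand_det_row _ 0) sum_ord2 /cofactor !det_mx11 !mxE /=.
have -> : lift 0 0 = 1 :> 'I_2 by apply: val_inj.
have -> : lift 1 0 = 0 :> 'I_2 by apply: val_inj.
by rewrite expr0 expr1 mul1r mulN1r mulrN.
Qed.

Lemma trace2E A : \tr A = A 0 0 + A 1 1.
Proof. exact: sum_ord2. Qed.

Lemma frob_sqrE A : frob A ^+ 2 = A 0 0 ^+ 2 + A 0 1 ^+ 2 + A 1 0 ^+ 2 + A 1 1 ^+ 2.
Proof.
rewrite /frob sqr_sqrtr; first by rewrite !sum_ord2 !addrA.
by apply: sumr_ge0 => i _; apply: sumr_ge0 => j _; apply: sqr_ge0.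
Qed.

Lemma vnorm_sqr v : vnorm v ^+ 2 = v 0 0 ^+ 2 + v 1 0 ^+ 2.
Proof. by rewrite /vnorm ipE -!expr2 sqr_sqrtr // addr_ge0 ?sqr_ge0. Qed.

Lemma vnorm_ge0 v : 0 <= vnorm v.
Proof. exact: sqrtr_ge0. Qed.

Lemma vnorm_gt0 v : v != 0 -> 0 < vnorm v.
Proof.
move=> v_neq0; rewrite lt_def vnorm_ge0 andbT; apply: contra v_neq0 => /eqP v0.
have : v 0 0 ^+ 2 + v 1 0 ^+ 2 == 0 by rewrite -vnorm_sqr v0 expr0n.
by rewrite paddr_eq0 ?sqr_ge0 // !sqrf_eq0 => /andP[/eqP? /eqP?]; apply/eqP/cV2_ext; rewrite mxE.
Qed.

Lemma abs_coord_le_vnorm v i : `|v i 0| <= vnorm v.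
Proof.
rewrite -ler_sqr ?nnegrE ?vnorm_ge0 // real_normK ?num_real // vnorm_sqr.
by case: (ord2_cases i) => ->; rewrite ?lerDl ?lerDr sqr_ge0.
Qed.

Definition cross u v : R := u 0 0 * v 1 0 - u 1 0 * v 0 0.

Lemma lagrange_identity u v :
  vnorm u ^+ 2 * vnorm v ^+ 2 = ip u v ^+ 2 + cross u v ^+ 2.
Proof. by rewrite !vnorm_sqr ipE /cross; ring. Qed.

Lemma abs_ip_le u v : `|ip u v| <= vnorm u * vnorm v.
Proof.
rewrite -ler_sqr ?nnegrE ?mulr_ge0 ?vnorm_ge0 // real_normK ?num_real //.
by rewrite exprMn lagrange_identity lerDl sqr_ge0.
Qed.

Lemma lin_indep2_neq0 x y : lin_indep2 x y -> [/\ x != 0, y != 0 & x + y != 0].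
Proof.
move=> xy; split; apply/eqP => v0.
- by have := xy 1 0; rewrite scale1r scale0r addr0 v0 => /(_ erefl) [/eqP]; rewrite oner_eq0.
- by have := xy 0 1; rewrite scale1r scale0r add0r v0 => /(_ erefl) [_ /eqP]; rewrite oner_eq0.
- by have := xy 1 1; rewrite !scale1r v0 => /(_ erefl) [/eqP]; rewrite oner_eq0.
Qed.

(* The combinations y_1 x - x_1 y and y_0 x - x_0 y each have a zero coordinate,
   the other one being +/- cross x y. *)
Lemma lin_indep2_cross x y : lin_indep2 x y -> cross x y != 0.
Proof.
move=> xy; apply/eqP => c0; have [x0 _ _] := lin_indep2_neq0 xy.
have [y10 x10] : y 1 0 = 0 /\ - x 1 0 = 0.
  by apply: xy; apply/cV2_ext; rewrite !mxE; move: c0; rewrite /cross => c0; nra.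
have [y00 x00] : y 0 0 = 0 /\ - x 0 0 = 0.
  by apply: xy; apply/cV2_ext; rewrite !mxE; move: c0; rewrite /cross => c0; nra.
by move/eqP: x0; apply; apply/cV2_ext; rewrite mxE; lra.
Qed.

End Coordinates.

Section DistanceToIsometries.
Variable R : realType.
Implicit Types (A Q : 'M[R]_2).

Definition orth2 (c s e : R) : 'M[R]_2 := \matrix_(i, j)
  if i == 0 then (if j == 0 then c else - (e * s)) else (if j == 0 then s else e * c).

Lemma orth2_isometry c s e : c ^+ 2 + s ^+ 2 = 1 -> e ^+ 2 = 1 -> isometries (orth2 c s e).
Proof.
move=> cs1 e1 v; congr Num.sqrt; rewrite !ipE -!expr2 !mulmx2E !mxE /=.
set v0 := v 0 0; set v1 := v 1 0.
have -> : (c * v0 + - (e * s) * v1) ^+ 2 + (s * v0 + e * c * v1) ^+ 2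
  = (c ^+ 2 + s ^+ 2) * v0 ^+ 2 + e ^+ 2 * (c ^+ 2 + s ^+ 2) * v1 ^+ 2 by ring.
by rewrite cs1 e1 !mul1r.
Qed.

Lemma dist_O_le A Q : isometries Q -> dist_O A <= frob (A - Q).
Proof.
move=> isoQ; apply: ge_inf; last by exists Q.
by exists 0 => _ [Q' _ <-]; apply: sqrtr_ge0.
Qed.

Lemma dist_O_ge0 A : 0 <= dist_O A.
Proof.
apply: lb_le_inf; last by move=> _ [Q _ <-]; apply: sqrtr_ge0.
by exists (frob (A - 1%:M)), 1%:M => // v; rewrite mul1mx.
Qed.

Lemma dist_O_sqr_le A Q : isometries Q -> dist_O A ^+ 2 <= frob (A - Q) ^+ 2.
Proof.
by move=> isoQ; rewrite ler_sqr ?nnegrE ?dist_O_ge0 ?sqrtr_ge0 ?dist_O_le.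
Qed.

(* Q is the rotation (det A >= 0) or reflection best aligned with A; the bound
   is the exact distance, sqrt (|A|^2 + 2 |det A|) being the sum of the
   singular values of A. *)
Lemma dist_O_sqr_le_singular A :
  dist_O A ^+ 2 <= frob A ^+ 2 + 2 - 2 * Num.sqrt (frob A ^+ 2 + 2 * `|\det A|).
Proof.
have [e [e1 eD]] : exists e : R, e ^+ 2 = 1 /\ e * \det A = `|\det A|.
  have [D0|D0] := leP 0 (\det A).
    by exists 1; rewrite expr1n mul1r ger0_norm.
  by exists (-1); rewrite sqrrN expr1n mulN1r ltr0_norm.
have [c [s [cs1 hcs]]] := exists_unit_dot_eq_norm (A 0 0 + e * A 1 1) (A 1 0 - e * A 0 1).
apply: le_trans (dist_O_sqr_le A (orth2_isometry cs1 e1)) _.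
rewrite -eD !frob_sqrE det2E.
have ecs : (A 0 0 + e * A 1 1) ^+ 2 + (A 1 0 - e * A 0 1) ^+ 2 =
  A 0 0 ^+ 2 + A 0 1 ^+ 2 + A 1 0 ^+ 2 + A 1 1 ^+ 2 + 2 * (e * (A 0 0 * A 1 1 - A 0 1 * A 1 0))
  + (e ^+ 2 - 1) * (A 0 1 ^+ 2 + A 1 1 ^+ 2) by ring.
rewrite ecs e1 subrr mul0r addr0 in hcs; rewrite -hcs !mxE /=.
have -> : forall p q r t : R,
  (p - c) ^+ 2 + (q - - (e * s)) ^+ 2 + (r - s) ^+ 2 + (t - e * c) ^+ 2 =
  p ^+ 2 + q ^+ 2 + r ^+ 2 + t ^+ 2 + (c ^+ 2 + s ^+ 2) * (1 + e ^+ 2)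
    - 2 * (c * (p + e * t) + s * (r - e * q)) by move=> *; ring.
by rewrite cs1 e1; lra.
Qed.

End DistanceToIsometries.

Section GramDefect.
Variable R : realType.
Implicit Types (A G : 'M[R]_2) (x y v : 'cV[R]_2).

Definition gram_defect A := A^T *m A - 1%:M.

Lemma gram_defectE A i j :
  gram_defect A i j = A 0 i * A 0 j + A 1 i * A 1 j - (i == j)%:R.
Proof. by rewrite !mxE sum_ord2 !mxE. Qed.

Lemma two_abs_det_le_frob_sqr A : 2 * `|\det A| <= frob A ^+ 2.
Proof.
rewrite frob_sqrE det2E.
have := sqr_ge0 (A 0 0 - A 1 1); have := sqr_ge0 (A 0 1 + A 1 0).
have := sqr_ge0 (A 0 0 + A 1 1); have := sqr_ge0 (A 0 1 - A 1 0).
by case: (leP 0 (A 0 0 * A 1 1 - A 0 1 * A 1 0)) => D0;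
  [rewrite ger0_norm | rewrite ltr0_norm]; nra.
Qed.

Lemma dist_O_sqr_le_frob_gram A : dist_O A ^+ 2 <= frob (gram_defect A) ^+ 2.
Proof.
apply: le_trans (dist_O_sqr_le_singular A) _.
apply: le_trans (singular_defect_le (normr_ge0 _) (two_abs_det_le_frob_sqr A)) _.
rewrite real_normK ?num_real // !frob_sqrE !gram_defectE det2E /=.
by rewrite le_eqVlt; apply/orP; left; apply/eqP; ring.
Qed.

Lemma dist_O_sqr_le_tr_gram A : dist_O A ^+ 2 <= \tr (gram_defect A) + 4.
Proof.
apply: le_trans (dist_O_sqr_le_singular A) _.
rewrite trace2E !gram_defectE frob_sqrE /=.
by have := sqrtr_ge0 (A 0 0 ^+ 2 + A 0 1 ^+ 2 + A 1 0 ^+ 2 + A 1 1 ^+ 2 + 2 * `|\det A|); lra.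
Qed.

Definition qform G v : R := (v^T *m G *m v) 0 0.

Lemma qformE G v :
  qform G v = G 0 0 * v 0 0 ^+ 2 + (G 0 1 + G 1 0) * (v 0 0 * v 1 0) + G 1 1 * v 1 0 ^+ 2.
Proof. by rewrite /qform mxE sum_ord2 !mxE !sum_ord2 !mxE; ring. Qed.

Lemma qform_gram A v : qform (gram_defect A) v = vnorm (A *m v) ^+ 2 - vnorm v ^+ 2.
Proof. by rewrite qformE !gram_defectE !vnorm_sqr !mulmx2E /=; ring. Qed.

Lemma abs_qform_gram A v : v != 0 ->
  `|qform (gram_defect A) v| = `|(vnorm (A *m v) / vnorm v) ^+ 2 - 1| * vnorm v ^+ 2.
Proof.
move=> /vnorm_gt0 v0; rewrite qform_gram -[X in _ = _ * X]ger0_norm ?sqr_ge0 // -normrM.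
by rewrite mulrBl mul1r expr_div_n divfK // sqrf_eq0 gt_eqF.
Qed.

Definition perp v : 'cV[R]_2 := \col_i (if i == 0 then v 1 0 else - v 0 0).

Lemma abs_perp_le v i : `|perp v i 0| <= vnorm v.
Proof.
by rewrite mxE; case: (ord2_cases i) => -> /=; rewrite ?normrN abs_coord_le_vnorm.
Qed.

(* Cramer's rule for the symmetric matrix G, given the values of its quadratic
   form at x, y and x + y. *)
Lemma qform_recover G x y i j : G 1 0 = G 0 1 ->
  2 * cross x y ^+ 2 * G i j =
    perp y i 0 * perp y j 0 * (2 * qform G x)
    - (perp y i 0 * perp x j 0 + perp x i 0 * perp y j 0)
      * (qform G (x + y) - qform G x - qform G y)
    + perp x i 0 * perp x j 0 * (2 * qform G y).
Proof.
move=> G_sym; rewrite !qformE G_sym !mxE /cross.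
by case: (ord2_cases i) => ->; case: (ord2_cases j) => -> /=; rewrite ?G_sym; ring.
Qed.

(* For t = cos theta this is (1 + 2 r + 2 / r) / sin^2 theta. *)
Definition gram_const (t r : R) : R := (1 + 2 * r + 2 / r) / (1 - t ^+ 2).

Lemma gram_const_ge0 (t r : R) : t ^+ 2 <= 1 -> 0 <= r -> 0 <= gram_const t r.
Proof.
move=> t1 r0; apply: divr_ge0; last by rewrite subr_ge0.
have : 0 <= 2 / r by rewrite divr_ge0.
lra.
Qed.

Lemma gram_const_cross x y : cross x y != 0 ->
  gram_const (ip x y / (vnorm x * vnorm y)) (vnorm y / vnorm x) * cross x y ^+ 2
  = vnorm x ^+ 2 * vnorm y ^+ 2 + 2 * (vnorm x * vnorm y) * (vnorm x ^+ 2 + vnorm y ^+ 2).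
Proof.
move=> c0; have c2 : cross x y ^+ 2 = (vnorm x * vnorm y) ^+ 2 - ip x y ^+ 2.
  by rewrite exprMn lagrange_identity [ip x y ^+ 2 + _]addrC addrK.
have : vnorm x * vnorm y != 0.
  have : 0 < cross x y ^+ 2 by rewrite exprn_even_gt0 //= c0 orbT.
  rewrite -sqrf_eq0 exprMn lagrange_identity; have := sqr_ge0 (ip x y).
  by move=> *; rewrite gt_eqF //; lra.
rewrite mulf_eq0 negb_or => /andP[nx0 ny0].
by rewrite /gram_const c2; field; rewrite nx0 ny0 -c2 sqrf_eq0 c0.
Qed.

Lemma vnorm_addr_sqr_le x y : vnorm (x + y) ^+ 2 <= 2 * vnorm x ^+ 2 + 2 * vnorm y ^+ 2.
Proof.
rewrite !vnorm_sqr !mxE.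
by have := sqr_ge0 (x 0 0 - y 0 0); have := sqr_ge0 (x 1 0 - y 1 0); nra.
Qed.

Lemma abs_qform_polar_le G x y (al be ga : R) : 0 <= al -> 0 <= be -> 0 <= ga ->
  `|qform G x| <= al * vnorm x ^+ 2 -> `|qform G y| <= be * vnorm y ^+ 2 ->
  `|qform G (x + y)| <= ga * vnorm (x + y) ^+ 2 ->
  `|qform G (x + y) - qform G x - qform G y|
    <= 2 * (al + be + ga) * (vnorm x ^+ 2 + vnorm y ^+ 2).
Proof.
move=> al0 be0 ga0 hx hy hxy.
have hxy' := le_trans hxy (ler_wpM2l ga0 (vnorm_addr_sqr_le x y)).
have := ler_normB (qform G (x + y) - qform G x) (qform G y).
have := ler_normB (qform G (x + y)) (qform G x).
have := sqr_ge0 (vnorm x); have := sqr_ge0 (vnorm y).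
nra.
Qed.

Lemma qform_entry_le G x y (al be ga : R) i j : G 1 0 = G 0 1 -> cross x y != 0 ->
  0 <= al -> 0 <= be -> 0 <= ga ->
  `|qform G x| <= al * vnorm x ^+ 2 -> `|qform G y| <= be * vnorm y ^+ 2 ->
  `|qform G (x + y)| <= ga * vnorm (x + y) ^+ 2 ->
  `|G i j| <= (al + be + ga) * gram_const (ip x y / (vnorm x * vnorm y)) (vnorm y / vnorm x).
Proof.
move=> G_sym c0 al0 be0 ga0 hx hy hxy.
have c2 : 0 < 2 * cross x y ^+ 2 by rewrite mulr_gt0 // exprn_even_gt0 //= c0 orbT.
rewrite -(ler_pM2l c2).
set K := gram_const _ _; set L := al + be + ga.
have -> : 2 * cross x y ^+ 2 * (L * K) = 2 * L * (K * cross x y ^+ 2) by ring.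
rewrite gram_const_cross //.
rewrite -[X in X * _](ger0_norm (ltW c2)) -normrM qform_recover //.
have hP := abs_qform_polar_le al0 be0 ga0 hx hy hxy.
set nx := vnorm x in hP *; set ny := vnorm y in hP *.
have t1 : `|perp y i 0 * perp y j 0 * (2 * qform G x)| <= ny * ny * (2 * (al * nx ^+ 2)).
  by rewrite normrM3_le ?abs_perp_le // normrM ger0_norm ?ler_wpM2l.
have t3 : `|perp x i 0 * perp x j 0 * (2 * qform G y)| <= nx * nx * (2 * (be * ny ^+ 2)).
  by rewrite normrM3_le ?abs_perp_le // normrM ger0_norm ?ler_wpM2l.
have hperp : `|perp y i 0 * perp x j 0 + perp x i 0 * perp y j 0| <= 2 * (ny * nx).
  apply: le_trans (ler_normD _ _) _; rewrite mulr2n mulrDl mul1r.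
  by apply: lerD; rewrite normrM; [|rewrite [ny * nx]mulrC];
    apply: ler_pM; rewrite ?normr_ge0 ?abs_perp_le.
have t2 := ler_pM (normr_ge0 _) (normr_ge0 _) hperp hP; rewrite -normrM in t2.
apply: le_trans (ler_normD _ _) _; apply: le_trans (lerD (ler_normB _ _) (lexx _)) _.
have := mulr_ge0 ga0 (mulr_ge0 (sqr_ge0 nx) (sqr_ge0 ny)).
rewrite /L; lra.
Qed.

End GramDefect.

Section Rigidity.
Variable R : realType.

Lemma gram_defect_entry_le (A : 'M[R]_2) x y i j : lin_indep2 x y ->
  `|gram_defect A i j| <=
    (`|(vnorm (A *m x) / vnorm x) ^+ 2 - 1| + `|(vnorm (A *m y) / vnorm y) ^+ 2 - 1|
     + `|(vnorm (A *m (x + y)) / vnorm (x + y)) ^+ 2 - 1|)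
    * gram_const (ip x y / (vnorm x * vnorm y)) (vnorm y / vnorm x).
Proof.
move=> xy; have [x0 y0 xy0] := lin_indep2_neq0 xy.
apply: qform_entry_le; rewrite ?normr_ge0 ?abs_qform_gram ?lin_indep2_cross //.
by rewrite !gram_defectE /=; ring.
Qed.

Definition rigidity_const (p : R * R) : R := 200 * (1 + gram_const (cos p.1) p.2) ^+ 2.

Lemma rigidity_const_gt0 p : 0 < p.2 -> 0 < rigidity_const p.
Proof.
move=> r0; have K0 : 0 <= gram_const (cos p.1) p.2.
  by apply: gram_const_ge0 (ltW r0); rewrite cos2sin2; have := sqr_ge0 (sin p.1); lra.
by rewrite mulr_gt0 // exprn_gt0 // ltr_pwDl.
Qed.

Lemma rigidity_const_continuous p : 0 < p.1 < pi -> 0 < p.2 ->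
  {for p, continuous rigidity_const}.
Proof.
move=> p1 r0.
have sin_neq0 : 1 - cos p.1 ^+ 2 != 0 by rewrite -sin2cos2 sqrf_eq0 gt_eqF ?sin_gt0_pi.
have cst (c : R) : {for p, continuous (fun _ : R * R => c)} by apply: cvg_cst.
have cos1 : {for p, continuous (fun q : R * R => cos q.1)}.
  by apply: (continuous_comp (f := fst) (g := cos)); [apply: cvg_fst | apply: continuous_cos].
have sqr (f : R * R -> R) : {for p, continuous f} -> {for p, continuous (fun q => f q ^+ 2)}.
  by move=> fc; apply: (continuous_comp (g := (@GRing.exp R)^~ 2) fc); apply: exprn_continuous.
apply: continuousM (cst _) _; apply: (sqr _); apply: continuousD (cst _) _.
apply: continuousM.
  apply: continuousD; first apply: continuousD (cst _) _.
  - by apply: continuousM (cst _) _; apply: cvg_snd.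
  - by apply: continuousM (cst _) _; apply: continuousV; [rewrite gt_eqF | apply: cvg_snd].
apply: continuousV => //; apply: continuousD (cst _) _.
by apply: continuousN; apply: (sqr _).
Qed.

Lemma rigidity_combination (G : 'M[R]_2) (a b c K d : R) :
  0 <= a -> 0 <= b -> 0 <= c -> 0 <= K ->
  (forall i j, `|G i j| <= (`|a ^+ 2 - 1| + `|b ^+ 2 - 1| + `|c ^+ 2 - 1|) * K) ->
  d <= frob G ^+ 2 -> d <= \tr G + 4 ->
  d <= 200 * (1 + K) ^+ 2 * ((a - 1) ^+ 2 + (b - 1) ^+ 2 + (c - 1) ^+ 2).
Proof.
move=> a0 b0 c0 K0 hG d_frob d_tr.
set L := `|a ^+ 2 - 1| + _ + _ in hG; set S := (a - 1) ^+ 2 + _ + _.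
have L0 : 0 <= L by rewrite !addr_ge0.
have S0 : 0 <= S by rewrite !addr_ge0 ?sqr_ge0.
have [S1 | S1] := ltP S 1.
  have LS : L ^+ 2 * K ^+ 2 <= 27 * S * K ^+ 2.
    by rewrite ler_wpM2r ?sqr_ge0 ?sum_abs_sqr_subr1_sqr_le.
  have sqG i j : G i j ^+ 2 <= L ^+ 2 * K ^+ 2.
    by rewrite -exprMn -real_normK ?num_real // ler_sqr ?nnegrE ?mulr_ge0.
  have := sqG 0 0; have := sqG 0 1; have := sqG 1 0; have := sqG 1 1.
  have : 0 <= (200 * (1 + K) ^+ 2 - 108 * K ^+ 2) * S by rewrite mulr_ge0 //; nra.
  by rewrite frob_sqrE in d_frob; lra.
have LS : L * K <= 11 * S * K by rewrite ler_wpM2r ?sum_abs_sqr_subr1_le.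
have := le_trans (ler_norm _) (hG 0 0); have := le_trans (ler_norm _) (hG 1 1).
have : 0 <= (200 * (1 + K) ^+ 2 - 22 * K - 4) * S by rewrite mulr_ge0 //; nra.
by rewrite trace2E in d_tr; lra.
Qed.

End Rigidity.

Theorem lemmaA4 (R : realType) :
  exists C : (R * R)%type -> R,
    (forall p : (R * R)%type, 0 < p.1 < pi -> 0 < p.2 ->
        {for p, continuous C} /\ 0 < C p) /\
    forall x y : 'cV[R]_2, lin_indep2 x y ->
    forall A : 'M[R]_2,
      dist_O A ^+ 2 <=
      C (vangle x y, vnorm y / vnorm x) *
        ((vnorm (A *m x) / vnorm x - 1) ^+ 2
         + (vnorm (A *m y) / vnorm y - 1) ^+ 2
         + (vnorm (A *m (x + y)) / vnorm (x + y) - 1) ^+ 2).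
Proof.
exists (@rigidity_const R); split=> [p p1 r0 | x y xy A].
  by split; [apply: rigidity_const_continuous | apply: rigidity_const_gt0].
have [x0 y0 xy0] := lin_indep2_neq0 xy.
have nxy : 0 < vnorm x * vnorm y by rewrite mulr_gt0 ?vnorm_gt0.
have cos_xy : -1 <= ip x y / (vnorm x * vnorm y) <= 1.
  by rewrite -ler_norml normf_div (gtr0_norm nxy) ler_pdivrMr // mul1r abs_ip_le.
rewrite /rigidity_const /vangle /= acosK ?in_itv //.
apply: rigidity_combination (dist_O_sqr_le_frob_gram A) (dist_O_sqr_le_tr_gram A).
- by rewrite divr_ge0 ?vnorm_ge0.
- by rewrite divr_ge0 ?vnorm_ge0.
- by rewrite divr_ge0 ?vnorm_ge0.
- apply: gram_const_ge0; last by rewrite divr_ge0 ?vnorm_ge0.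
  by rewrite -real_normK ?num_real // -(expr1n _ 2) ler_sqr ?nnegrE // ler_norml.
- by move=> i j; apply: gram_defect_entry_le.
Qed.
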